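(* Fix $k\in\mathbb{N}$ and a cycle structure $x$ of some element of $S_\infty$. Then there exists $b_x\in\mathbb{N}$ such that for every finite group $G$ of cyclicity level $k$ and every injective homomorphism $\phi:G\hookrightarrow S_\infty$, the subgroup $\phi(G)$ contains at most $b_x$ elements with cycle structure $x$.
   Context: $S_\infty$ is the group of permutations of $\mathbb{N}$ fixing all but finitely many elements. The cycle structure of $\sigma\in S_\infty$ is the non-increasing sequence of lengths of its disjoint cycles. The cyclicity level of a finite solvable group $G$ is the minimal $k$ such that there is a chain $1=H_0\lhd H_1\lhd\cdots\lhd H_k=G$ with each $H_i$ normal in $H_{i+1}$ and $H_{i+1}/H_i$ cyclic. *)

From mathcomp Require Import all_boot all_order all_fingroup all_solvable.
Set Implicit Arguments. Unset Strict Implicit. Unset Printing Implicit Defensive.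
Local Open Scope group_scope.

(* Fixed points are
   not recorded, matching the S_infinity convention (an element of S_inf has
   infinitely many fixed points and finitely many nontrivial cycles). *)
Definition cycle_type (T : finType) (s : {perm T}) : seq nat :=
  sort geq [seq #|c| | c : {set T} <- enum (porbits s) & (1 < #|c|)%N].

(* A cyclic series of G of length size s:
   1 = H_0 <| H_1 <| ... <| H_k = G, with s = [:: H_1; ...; H_k],
   each H_i normal in H_{i+1} and H_{i+1}/H_i cyclic. *)
Definition cyclic_series (gT : finGroupType) (G : {group gT})
    (s : seq {group gT}) : bool :=
  path (fun H K : {group gT} => (H <| K) && cyclic (K / H)) 1%G s
  && (last 1%G s == G).

Definition cyclicity_level (gT : finGroupType) (G : {group gT}) (k : nat) : Prop :=
  (exists s, cyclic_series G s /\ size s = k) /\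
  (forall s, cyclic_series G s -> (k <= size s)%N).

From mathcomp Require Import all_boot all_order all_fingroup all_solvable.
Set Implicit Arguments. Unset Strict Implicit.
Local Open Scope group_scope.

(* A permutation of cycle structure x moves at most N := sumn x points, so its
   order divides N!.  Along a cyclic series 1 = H_0 <| ... <| H_k = G, the
   elements of H_(i+1) moving at most N points are sent into the N!-torsion of
   the cyclic group H_(i+1)/H_i, which has at most N! elements, and two of them
   in the same coset of H_i differ by an element of H_i moving at most 2N
   points.  By induction on k, at most f(k, N) elements of G move at most N
   points, where f(0, N) = 1 and f(k+1, N) = N! f(k, 2N). *)

Definition psupport (T : finType) (s : {perm T}) : {set T} := [set i | s i != i].

Lemma card_bigcup_le (I T : finType) (P : pred I) (F : I -> {set T}) :
  (#|\bigcup_(i | P i) F i| <= \sum_(i | P i) #|F i|)%N.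
Proof.
apply: (big_ind2 (fun (U : {set T}) n => #|U| <= n)%N) => //.
- by rewrite cards0.
- move=> U1 n1 U2 n2 le1 le2; apply: leq_trans (leq_card_setU _ _) _.
  exact: leq_add.
Qed.

Lemma card_psupport_cycle_type (T : finType) (s : {perm T}) :
  (#|psupport s| <= sumn (cycle_type s))%N.
Proof.
rewrite /cycle_type (perm_sumn (permEl (perm_sort _ _))) sumnE big_map.
rewrite big_filter big_enum_cond /=.
apply: leq_trans (card_bigcup_le _ id); apply/subset_leq_card/subsetP => i.
rewrite inE => moved_i; apply/bigcupP; exists (porbit s i); last exact: porbit_id.
rewrite imset_f //=; apply: (@leq_trans #|[set i; s i]|).
  by rewrite cards2 eq_sym moved_i.
apply/subset_leq_card/subsetP => j; rewrite !inE => /orP[]/eqP ->.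
  exact: porbit_id.
by rewrite -(expg1 s) mem_porbit.
Qed.

Lemma porbit_sub_psupport (T : finType) (s : {perm T}) i :
  s i != i -> porbit s i \subset psupport s.
Proof.
move=> moved_i; apply/subsetP => j /porbitP[a ->]; rewrite inE.
apply: contra moved_i => /eqP fixed; apply/eqP; apply: (@perm_inj _ (s ^+ a)).
by rewrite -permM -expgS expgSr permM fixed.
Qed.

Lemma expg_fact_card_psupport (T : finType) (s : {perm T}) m :
  (#|psupport s| <= m)%N -> s ^+ m`! = 1.
Proof.
move=> le_supp_m; apply/permP => i; rewrite perm1.
have [fixed_i | moved_i] := eqVneq (s i) i; first exact: permX_fix.
have /dvdnP[q ->] : (#|porbit s i| %| m`!)%N.
  apply: dvdn_fact; rewrite lt0n card_porbit_neq0 /=.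
  exact: leq_trans (subset_leq_card (porbit_sub_psupport moved_i)) le_supp_m.
by rewrite mulnC expgM; apply: permX_fix; rewrite permX iter_porbit.
Qed.

Lemma card_psupport_mulVg (T : finType) (s t : {perm T}) :
  (#|psupport (s^-1 * t)| <= #|psupport s| + #|psupport t|)%N.
Proof.
apply: leq_trans (leq_card_setU _ _); apply/subset_leq_card/subsetP => i.
rewrite !inE; apply: contraR; rewrite negb_or !negbK => /andP[/eqP fix_s /eqP fix_t].
by rewrite permM -{1}fix_s permK fix_t.
Qed.

Lemma card_cyclic_Ldiv_le (gT : finGroupType) (C : {group gT}) e :
  cyclic C -> (0 < e)%N -> (#|'Ldiv_e(C)| <= e)%N.
Proof.
move=> cycC e_gt0; have Ldiv_gr := group_Ldiv e (cyclic_abelian cycC).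
have /cyclicP[z defL] : cyclic (Group Ldiv_gr) by apply: cyclicS cycC; rewrite subsetIl.
have /LdivP[_ ze] : z \in 'Ldiv_e(C).
  by rewrite -[_ \in _]/(z \in Group Ldiv_gr) defL cycle_id.
have -> : #|'Ldiv_e(C)| = #[z] by rewrite /order -defL.
by apply: dvdn_leq e_gt0 _; rewrite order_dvdn ze.
Qed.

Lemma card_cyclic_quotient_le (gT : finGroupType) (H K : {group gT})
    (A B : {set gT}) e :
  H <| K -> cyclic (K / H) -> (0 < e)%N -> A \subset K ->
  {in A, forall a, a ^+ e \in H} -> {in A &, forall a b, a^-1 * b \in B} ->
  (#|A| <= e * #|H :&: B|)%N.
Proof.
move=> nsHK cycKH e_gt0 sAK Ae_H AB.
have sAN : A \subset 'N(H) := subset_trans sAK (normal_norm nsHK).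
rewrite -sum1_card (partition_big (coset H) (mem 'Ldiv_e(K / H))) /=; last first.
  move=> a Aa; apply/LdivP; split; first by rewrite mem_quotient ?(subsetP sAK).
  by rewrite -morphX ?(subsetP sAN) //; apply: coset_id; exact: Ae_H.
have fibre_le c : (\sum_(a in A | coset H a == c) 1 <= #|H :&: B|)%N.
  rewrite sum1_card; case: (pickP [pred a in A | coset H a == c]) => [a0 | no_a];
    last by rewrite eq_card0.
  case/andP=> Aa0 /eqP a0c; rewrite -(card_imset _ (mulgI a0^-1)).
  apply/subset_leq_card/subsetP => _ /imsetP[a /andP[Aa /eqP ac] ->].
  have [Na0 Na] := (subsetP sAN a0 Aa0, subsetP sAN a Aa).
  rewrite inE AB // andbT coset_idr ?groupM ?groupV //.
  by rewrite morphM ?groupV // morphV //= a0c ac mulVg.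
apply: leq_trans; first by apply: leq_sum => c _; apply: fibre_le.
by rewrite sum_nat_const leq_mul2r card_cyclic_Ldiv_le ?orbT.
Qed.

Fixpoint series_bound (k m : nat) : nat :=
  if k is k'.+1 then m`! * series_bound k' m.*2 else 1.

Section InjectiveRepresentation.
Variables (gT : finGroupType) (G : {group gT}) (n : nat).
Variable phi : {morphism G >-> {perm 'I_n}}.
Hypothesis injphi : 'injm phi.

Definition small_support (K : {set gT}) m :=
  [set y in K | #|psupport (phi y)| <= m]%N.

Lemma card_small_support_cyclic_ext (H K : {group gT}) m :
  H <| K -> cyclic (K / H) -> K \subset G ->
  (#|small_support K m| <= m`! * #|small_support H m.*2|)%N.
Proof.
move=> nsHK cycKH sKG.
have sAG : small_support K m \subset G.
  by apply: subset_trans sKG; apply/subsetP => y /setIdP[].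
have -> : small_support H m.*2 = H :&: small_support G m.*2.
  apply/setP => y; rewrite !inE; apply: andb_id2l => Hy.
  by rewrite (subsetP sKG) ?(subsetP (normal_sub nsHK)).
apply: (card_cyclic_quotient_le nsHK cycKH (fact_gt0 m)).
- by apply/subsetP => y /setIdP[].
- move=> y /setIdP[Ky small_y]; have Gy := subsetP sKG y Ky.
  suff -> : y ^+ m`! = 1 by apply: group1.
  apply/eqP; rewrite -(morph_injm_eq1 injphi) ?groupX // morphX //.
  by rewrite expg_fact_card_psupport.
- move=> y z Ay Az; have [Gy Gz] := (subsetP sAG y Ay, subsetP sAG z Az).
  move: Ay Az; rewrite !inE => /andP[_ small_y] /andP[_ small_z].
  rewrite groupM ?groupV // morphM ?groupV // morphV //.
  by apply: leq_trans (card_psupport_mulVg _ _) _; rewrite -addnn leq_add.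
Qed.

Lemma card_small_support_series (s : seq {group gT}) m :
  path (fun H K : {group gT} => (H <| K) && cyclic (K / H)) 1%G s ->
  last 1%G s \subset G ->
  (#|small_support (last 1%G s) m| <= series_bound (size s) m)%N.
Proof.
elim/last_ind: s m => [m _ _ | s K IHs m].
  by rewrite /= -(cards1 (1 : gT)) subset_leq_card //; apply/subsetP => y /setIdP[].
rewrite rcons_path last_rcons size_rcons => /andP[path_s /andP[nsHK cycKH]] sKG /=.
apply: leq_trans (card_small_support_cyclic_ext m nsHK cycKH sKG) _.
rewrite leq_mul2l IHs ?orbT //.
exact: subset_trans (normal_sub nsHK) sKG.
Qed.

Lemma card_small_support_level k m :
  cyclicity_level G k -> (#|small_support G m| <= series_bound k m)%N.
Proof.
case=> [[s [/andP[path_s /eqP last_s] <-]] _].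
by have := card_small_support_series m path_s; rewrite last_s; apply.
Qed.

Lemma card_cycle_type_morphim k x :
  cyclicity_level G k ->
  (#|[set s in phi @* G | cycle_type s == x]| <= series_bound k (sumn x))%N.
Proof.
move=> levelG; apply: leq_trans (card_small_support_level (sumn x) levelG).
apply: leq_trans (leq_imset_card phi _); apply/subset_leq_card/subsetP => s.
rewrite inE => /andP[/morphimP[y _ Gy ->] /eqP type_y]; apply: imset_f.
by rewrite inE Gy -type_y card_psupport_cycle_type.
Qed.

End InjectiveRepresentation.

Theorem mainTheorem10 (k : nat) (x : seq nat)
    (hx : exists (n : nat) (s : 'S_n), cycle_type s = x) :
  exists b : nat,
    forall (gT : finGroupType) (G : {group gT}),
      cyclicity_level G k ->
      forall (n : nat) (phi : {morphism G >-> {perm 'I_n}}),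
        'injm phi ->
        (#|[set s in phi @* G | cycle_type s == x]| <= b)%N.
Proof.
exists (series_bound k (sumn x)) => gT G levelG n phi injphi.
exact: card_cycle_type_morphim.
Qed.
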